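(* For every integer $n\ge 1$, $$\sum_{\pi\in \mathcal I^C_{2n}(321)}q^{\mathrm{des}(\pi)}=(1+q)^n.$$
   Context: A permutation $\pi\in\mathcal S_m$ is centrosymmetric if $\pi(i)+\pi(m+1-i)=m+1$ for all $i$. $\mathcal I^C_m(321)$ is the set of centrosymmetric involutions in $\mathcal S_m$ avoiding the pattern $321$. $\mathrm{des}(\pi)$ is the number of positions $i\in\{1,\dots,m-1\}$ with $\pi(i)>\pi(i+1)$. *)

(* Permutations of [m] = {1..m} are modelled as {perm 'I_m}
   (0-indexed values 0..m-1); all notions below are the 0-indexed translations. *)
From HB Require Import structures.
From mathcomp Require Import all_boot all_order all_algebra all_fingroup.
Set Implicit Arguments. Unset Strict Implicit. Unset Printing Implicit Defensive.
Import GRing.Theory.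

(* centrosymmetric: pi(i) + pi(m+1-i) = m+1 (1-indexed), i.e. pi(i) + pi(m-1-i) = m-1 *)
Definition centrosymmetric m (s : {perm 'I_m}) : bool :=
  [forall i : 'I_m, (s i : nat) + s (rev_ord i) == m.-1].

Definition involution m (s : {perm 'I_m}) : bool := (s * s == 1)%g.

Definition avoids321 m (s : {perm 'I_m}) : bool :=
  [forall i : 'I_m, forall j : 'I_m, forall k : 'I_m,
     ~~ [&& i < j, j < k, s j < s i & s k < s j]].

Definition IC321 m : {set {perm 'I_m}} :=
  [set s | [&& centrosymmetric s, involution s & avoids321 s]].

Definition des m (s : {perm 'I_m}) : nat :=
  #|[set i : 'I_m | [exists j : 'I_m, (j == i.+1 :> nat) && (s j < s i)]]|.

From HB Require Import structures.
From mathcomp Require Import all_boot all_order all_algebra all_fingroup.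
From mathcomp Require Import zify.
Import GRing.Theory.
Set Implicit Arguments. Unset Strict Implicit. Unset Printing Implicit Defensive.

(* A 321-avoiding involution is determined by its openers (i < s i) and
   closers (s i < i): 321-avoidance forces the k-th opener to be matched with
   the k-th closer, and the closers are exactly the non-openers at which the
   Dyck path of the opener word is positive. Conversely, any opener/closer
   pair of words satisfying these height conditions is realised by matching
   the k-th opener with the k-th closer. Centrosymmetry exchanges openers and
   closers under i |-> 2n-1-i, so an element of I^C_2n(321) is the same thing
   as an arbitrary opener word u of length n on the first half. Its descents
   are its peaks (an opener followed by a closer): two for each factor 10 of
   u plus one if u ends with 1, i.e. the number of letter changes in 0u. The
   change transform is a bijection of {0,1}^n, hence the sum is (1+q)^n. *)

Section CountLt.
Variable P : nat -> bool.

Definition count_lt i := count P (iota 0 i).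

Lemma count_lt0 : count_lt 0 = 0. Proof. by []. Qed.

Lemma count_ltS i : count_lt i.+1 = count_lt i + P i.
Proof. by rewrite /count_lt -addn1 iotaD count_cat /= addn0. Qed.

Lemma count_ltD a b :
  count_lt (a + b) = count_lt a + count (fun k => P (a + k)) (iota 0 b).
Proof.
rewrite /count_lt iotaD count_cat add0n; congr (_ + _).
by rewrite -[in LHS](addn0 a) iotaDl count_map.
Qed.

Lemma leq_count_lt a b : a <= b -> count_lt a <= count_lt b.
Proof. by move/subnK <-; rewrite addnC count_ltD leq_addr. Qed.

Lemma ltn_count_lt a b : P a -> a < b -> count_lt a < count_lt b.
Proof. by move=> Pa /leq_count_lt; apply: leq_trans; rewrite count_ltS Pa addn1. Qed.

Lemma count_lt_ltn a b : count_lt a < count_lt b -> a < b.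
Proof. by apply: contraTT; rewrite -!leqNgt; apply: leq_count_lt. Qed.

Lemma count_lt_inj a b : P a -> P b -> count_lt a = count_lt b -> a = b.
Proof.
move=> Pa Pb e; case: (ltngtP a b) => // h.
- by have := ltn_count_lt Pa h; rewrite e ltnn.
- by have := ltn_count_lt Pb h; rewrite e ltnn.
Qed.

Lemma count_lt_rev N : count (fun k => P (N - 1 - k)) (iota 0 N) = count_lt N.
Proof.
elim: N => [|N IH] //; rewrite count_ltS -IH.
have -> : iota 0 N.+1 = 0 :: iota (1 + 0) N by [].
rewrite iotaDl /= count_map subn0 subn1 /= addnC; congr (_ + _).
by apply: eq_count => k /=; congr P; lia.
Qed.

Lemma nth_filter_iota m k : k < count_lt m ->
  let y := nth 0 (filter P (iota 0 m)) k in [/\ P y, y < m & count_lt y = k].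
Proof.
move=> km y; have : y \in filter P (iota 0 m) by apply: mem_nth; rewrite size_filter.
rewrite mem_filter mem_iota add0n => /andP[Py ym]; split => //.
have <- : index y (filter P (iota 0 m)) = k.
  by rewrite index_uniq ?size_filter ?filter_uniq ?iota_uniq.
have -> : m = y + (m - y.+1).+1 by lia.
rewrite iotaD filter_cat index_cat mem_filter mem_iota ltnn andbF /=.
by rewrite size_filter Py /= eqxx addn0.
Qed.

End CountLt.

Lemma eq_count_lt (P Q : nat -> bool) : P =1 Q -> count_lt P =1 count_lt Q.
Proof. by move=> PQ i; apply: eq_count. Qed.

Section Pairing.
Variables (m : nat) (O C : nat -> bool).
Hypothesis OC_disj : forall i, ~~ (O i && C i).
Hypothesis OC_balanced : count_lt O m = count_lt C m.
Hypothesis closer_below : forall c, c < m -> C c -> count_lt C c < count_lt O c.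
Hypothesis free_level : forall x, x < m -> ~~ O x -> ~~ C x ->
  count_lt O x = count_lt C x.

Definition pairing i :=
  if O i then nth 0 (filter C (iota 0 m)) (count_lt O i)
  else if C i then nth 0 (filter O (iota 0 m)) (count_lt C i) else i.

Lemma pairing_opener i : i < m -> O i ->
  [/\ C (pairing i), pairing i < m & count_lt C (pairing i) = count_lt O i].
Proof.
move=> im Oi; rewrite /pairing Oi.
by apply: nth_filter_iota; rewrite -OC_balanced; apply: ltn_count_lt Oi im.
Qed.

Lemma pairing_closer i : i < m -> C i ->
  [/\ O (pairing i), pairing i < m & count_lt O (pairing i) = count_lt C i].
Proof.
move=> im Ci; have /negbTE Oi : ~~ O i by have := OC_disj i; rewrite Ci andbT.
rewrite /pairing Oi Ci.
by apply: nth_filter_iota; rewrite OC_balanced; apply: ltn_count_lt Ci im.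
Qed.

Lemma pairing_free i : ~~ O i -> ~~ C i -> pairing i = i.
Proof. by rewrite /pairing => /negbTE -> /negbTE ->. Qed.

Lemma pairing_ltm i : i < m -> pairing i < m.
Proof.
move=> im; case Oi: (O i); first by case: (pairing_opener im Oi).
case Ci: (C i); first by case: (pairing_closer im Ci).
by rewrite pairing_free ?Oi ?Ci.
Qed.

Lemma pairingK i : i < m -> pairing (pairing i) = i.
Proof.
move=> im; case Oi: (O i).
  case: (pairing_opener im Oi) => Cj jm rj; case: (pairing_closer jm Cj) => Ok _ rk.
  by apply: count_lt_inj Ok Oi _; rewrite rk rj.
case Ci: (C i).
  case: (pairing_closer im Ci) => Oj jm rj; case: (pairing_opener jm Oj) => Ck _ rk.
  by apply: count_lt_inj Ck Ci _; rewrite rk rj.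
by rewrite !pairing_free ?Oi ?Ci.
Qed.

Lemma pairing_gt i : i < m -> O i -> i < pairing i.
Proof.
move=> im Oi; case: (pairing_opener im Oi) => Cj jm rj.
case: (ltngtP i (pairing i)) => // h.
- have := closer_below jm Cj; rewrite rj.
  by have := leq_count_lt O (ltnW h); lia.
- by have := OC_disj i; rewrite Oi h Cj.
Qed.

Lemma pairing_lt i : i < m -> C i -> pairing i < i.
Proof.
move=> im Ci; case: (pairing_closer im Ci) => Oj jm _.
by have := pairing_gt jm Oj; rewrite pairingK.
Qed.

Lemma pairing_cases i : i < m ->
  [\/ O i /\ i < pairing i, C i /\ pairing i < i
    | [/\ ~~ O i, ~~ C i & pairing i = i]].
Proof.
move=> im; case Oi: (O i); first by constructor 1; split => //; apply: pairing_gt.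
case Ci: (C i); first by constructor 2; split => //; apply: pairing_lt.
by constructor 3; rewrite ?pairing_free ?Oi ?Ci.
Qed.

Lemma pairing_homo_opener a b : b < m -> O a -> O b -> a < b ->
  pairing a < pairing b.
Proof.
move=> bm Oa Ob ab; have am : a < m by lia.
case: (pairing_opener am Oa) => _ _ ra; case: (pairing_opener bm Ob) => _ _ rb.
by apply: (@count_lt_ltn C); rewrite ra rb; apply: ltn_count_lt Oa ab.
Qed.

Lemma pairing_homo_closer a b : b < m -> C a -> C b -> a < b ->
  pairing a < pairing b.
Proof.
move=> bm Ca Cb ab; have am : a < m by lia.
case: (pairing_closer am Ca) => _ _ ra; case: (pairing_closer bm Cb) => _ _ rb.
by apply: (@count_lt_ltn O); rewrite ra rb; apply: ltn_count_lt Ca ab.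
Qed.

Lemma pairing_free_outside o x : x < m -> O o -> ~~ O x -> ~~ C x ->
  o < x -> x < pairing o -> False.
Proof.
move=> xm Oo Ox Cx ox xj; have om : o < m by lia.
case: (pairing_opener om Oo) => _ _ ro.
have := ltn_count_lt Oo ox; have := leq_count_lt C (ltnW xj).
by have := free_level xm Ox Cx; lia.
Qed.

Lemma pairing_no321 a b c : c < m -> a < b -> b < c ->
  pairing b < pairing a -> pairing c < pairing b -> False.
Proof.
move=> cm ab bc ba cb.
have bm : b < m by lia.
have am : a < m by lia.
have free_outside_closer d x : d < m -> C d -> ~~ O x -> ~~ C x ->
    pairing d < x -> x < d -> False.
  move=> dm Cd Ox Cx h1 h2; case: (pairing_closer dm Cd) => Oo _ _.
  by apply: (@pairing_free_outside (pairing d) x) => //; [lia | rewrite pairingK].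
(* In each of the 27 patterns, either the pairing is monotone on two openers
   or two closers, or a free point lies under an arc. *)
case: (pairing_cases am) => [[Oa ha]|[Ca ha]|[Oa Ca ha]];
case: (pairing_cases bm) => [[Ob hb]|[Cb hb]|[Ob Cb hb]];
case: (pairing_cases cm) => [[Oc hc]|[Cc hc]|[Oc Cc hc]];
try lia;
try (by have := pairing_homo_opener bm Oa Ob ab; lia);
try (by have := pairing_homo_closer bm Ca Cb ab; lia);
try (by have := pairing_homo_opener cm Ob Oc bc; lia);
try (by have := pairing_homo_closer cm Cb Cc bc; lia);
try (by apply: (@pairing_free_outside a b) => //; lia);
try (by apply: (@pairing_free_outside b c) => //; lia);
by apply: (@free_outside_closer b a) => //; lia.
Qed.

Definition pairing_ord (i : 'I_m) : 'I_m := insubd i (pairing i).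

Lemma pairing_ordE i : val (pairing_ord i) = pairing i.
Proof. by rewrite val_insubd pairing_ltm. Qed.

Lemma pairing_ordK : involutive pairing_ord.
Proof. by move=> i; apply: val_inj; rewrite !pairing_ordE pairingK. Qed.

Lemma exists_involution_321_of_words : exists s : {perm 'I_m},
  [/\ involutive s, avoids321 s &
      forall i : 'I_m, (i < s i) = O i /\ (s i < i) = C i].
Proof.
exists (perm (inv_inj pairing_ordK)); split.
- by move=> i; rewrite !permE pairing_ordK.
- apply/forallP => i; apply/forallP => j; apply/forallP => k; apply/negP.
  rewrite !permE !pairing_ordE => /and4P[ij jk ji kj].
  by apply: (@pairing_no321 i j k).
- move=> i; rewrite permE pairing_ordE.
  case: (pairing_cases (ltn_ord i)) => [[Oi h]|[Ci h]|[Oi Ci h]].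
  + have /negbTE Ci : ~~ C i by have := OC_disj i; rewrite Oi.
    by rewrite Oi Ci h ltnNge ltnW.
  + have /negbTE Oi : ~~ O i by have := OC_disj i; rewrite Ci andbT.
    by rewrite Oi Ci h ltnNge ltnW.
  + by rewrite h ltnn (negbTE Oi) (negbTE Ci).
Qed.

End Pairing.

(* Truncated predecessor: a non-opener at height 0 leaves the height at 0. *)
Fixpoint dyck_height (u : nat -> bool) i :=
  if i is j.+1 then (if u j then (dyck_height u j).+1 else (dyck_height u j).-1)
  else 0.

Definition closer_of (u : nat -> bool) i := ~~ u i && (0 < dyck_height u i).

Section Arcs.
Variable m : nat.
Implicit Types s t : {perm 'I_m}.

Definition opener s (i : nat) := [exists x : 'I_m, (x == i :> nat) && (x < s x)].
Definition closer s (i : nat) := [exists x : 'I_m, (x == i :> nat) && (s x < x)].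

Lemma opener_ord s (x : 'I_m) : opener s x = (x < s x).
Proof.
apply/existsP/idP => [[y /andP[/eqP/val_inj -> //]]|h].
by exists x; rewrite eqxx.
Qed.

Lemma closer_ord s (x : 'I_m) : closer s x = (s x < x).
Proof.
apply/existsP/idP => [[y /andP[/eqP/val_inj -> //]]|h].
by exists x; rewrite eqxx.
Qed.

Lemma opener_out s i : m <= i -> opener s i = false.
Proof. by move=> mi; apply/existsP => -[y /andP[/eqP yi _]]; have := ltn_ord y; lia. Qed.

Lemma closer_out s i : m <= i -> closer s i = false.
Proof. by move=> mi; apply/existsP => -[y /andP[/eqP yi _]]; have := ltn_ord y; lia. Qed.

Lemma card_count_lt (P : nat -> bool) p : p <= m ->
  #|[set x : 'I_m | P x && (x < p)]| = count_lt P p.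
Proof.
move=> pm; rewrite -sum1dep_card -(big_mkord (fun i => P i && (i < p)) (fun _ => 1)).
rewrite /index_iota subn0 sum1_count -(subnK pm) addnC iotaD count_cat.
rewrite (@eq_in_count _ _ P); last by move=> x; rewrite mem_iota => /andP[_ ->]; rewrite andbT.
rewrite (@eq_in_count _ (fun i => P i && (i < p)) pred0) ?count_pred0 ?addn0 // => x.
by rewrite mem_iota add0n => /andP[px _] /=; rewrite ltnNge px andbF.
Qed.

Lemma avoids321P s (a b c : 'I_m) : avoids321 s ->
  a < b -> b < c -> s b < s a -> s c < s b -> False.
Proof.
move=> /forallP /(_ a) /forallP /(_ b) /forallP /(_ c) h ab bc ba cb.
by move: h; rewrite ab bc ba cb.
Qed.

Section Involution321.
Variable s : {perm 'I_m}.
Hypothesis sK : involutive s.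
Hypothesis s321 : avoids321 s.

Lemma opener_homo (a b : 'I_m) : a < s a -> b < s b -> a < b -> s a < s b.
Proof.
move=> ha hb ab; case: (ltngtP (s a) (s b)) => // h.
- by case: (avoids321P s321 ab hb h); rewrite sK.
- by move: ab; rewrite (perm_inj (val_inj h)) ltnn.
Qed.

Lemma closer_homo (a b : 'I_m) : s a < a -> s b < b -> a < b -> s a < s b.
Proof.
move=> ha hb ab; case: (ltngtP (s a) (s b)) => // h.
- by case: (@avoids321P s (s b) (s a) a s321 h ha); rewrite !sK.
- by move: ab; rewrite (perm_inj (val_inj h)) ltnn.
Qed.

Lemma fixed_outside_arc (o x : 'I_m) : o < x -> x < s o -> s x = x -> False.
Proof. by move=> ox xo sx; apply: (avoids321P s321 ox xo); rewrite ?sK ?sx. Qed.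

(* The closers below the partner of an opener [o] are the partners of the
   openers below [o]. *)
Lemma count_lt_closer_partner (o : 'I_m) : o < s o ->
  count_lt (closer s) (s o) = count_lt (opener s) o.
Proof.
move=> os; rewrite -!card_count_lt ?(ltnW (ltn_ord _)) //.
suff -> : [set x : 'I_m | closer s x && (x < s o)] =
          s @: [set x : 'I_m | opener s x && (x < o)] by rewrite card_imset //; apply: perm_inj.
apply/setP => y; rewrite !inE closer_ord; apply/idP/imsetP.
- case/andP => ys yo; exists (s y); last by rewrite sK.
  rewrite inE opener_ord sK ys /=; case: (ltngtP (s y) o) => // h.
  + by have := opener_homo os _ h; rewrite sK ys => /(_ isT); lia.
  + by move: yo; rewrite -(val_inj h) sK ltnn.
- case=> x; rewrite inE opener_ord => /andP[xs xo] ->; rewrite sK xs.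
  exact: opener_homo.
Qed.

Lemma count_lt_fixed (x : 'I_m) : s x = x ->
  count_lt (opener s) x = count_lt (closer s) x.
Proof.
move=> sx; rewrite -!card_count_lt ?(ltnW (ltn_ord _)) //.
suff -> : [set y : 'I_m | closer s y && (y < x)] =
          s @: [set y : 'I_m | opener s y && (y < x)] by rewrite card_imset //; apply: perm_inj.
apply/setP => y; rewrite !inE closer_ord; apply/idP/imsetP.
- case/andP => ys yx; exists (s y); last by rewrite sK.
  by rewrite inE opener_ord sK ys /=; lia.
- case=> z; rewrite inE opener_ord => /andP[zs zx] ->; rewrite sK zs.
  case: (ltngtP (s z) x) => // h.
  + by case: (fixed_outside_arc zx h sx).
  + by move: zx; rewrite -(sK z) (val_inj h) sx ltnn.
Qed.

Lemma count_lt_closer (c : 'I_m) : s c < c ->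
  count_lt (closer s) c < count_lt (opener s) c.
Proof.
move=> cs; have := @count_lt_closer_partner (s c); rewrite sK => /(_ cs) ->.
by apply: (ltn_count_lt _ cs); rewrite opener_ord sK.
Qed.

Lemma closerE (i : 'I_m) :
  closer s i = ~~ opener s i && (count_lt (closer s) i < count_lt (opener s) i).
Proof.
rewrite opener_ord closer_ord; case: (ltngtP i (s i)) => h //=.
- by rewrite count_lt_closer.
- by rewrite count_lt_fixed ?ltnn //; apply: val_inj.
Qed.

Lemma count_lt_opener_height i : i <= m ->
  count_lt (opener s) i = count_lt (closer s) i + dyck_height (opener s) i.
Proof.
elim: i => [|i IH] // im; have := closerE (Ordinal im) => /= Ci.
rewrite !count_ltS Ci IH ?(ltnW im) //=.
by case: (opener s i) => /=; [lia | case: (dyck_height _ i) => /=; lia].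
Qed.

Lemma closer_of_opener (i : 'I_m) : closer s i = closer_of (opener s) i.
Proof.
rewrite closerE /closer_of count_lt_opener_height ?(ltnW (ltn_ord i)) //.
by congr (_ && _); lia.
Qed.

Lemma descent_peak (i j : 'I_m) : j = i.+1 :> nat ->
  (s j < s i) = (i < s i) && (s j < j).
Proof.
move=> ji; apply/idP/idP => [h|/andP[]]; last by lia.
case: (ltngtP i (s i)) => hi; case: (ltngtP j (s j)) => hj /=; try lia.
- by have := opener_homo hi hj (ltac:(lia)); lia.
- by case: (@fixed_outside_arc i j); try lia; apply: val_inj.
- by have := closer_homo hi hj (ltac:(lia)); lia.
- by case: (@fixed_outside_arc (s j) i); rewrite ?sK; try lia; apply: val_inj.
Qed.

Lemma des_peaks : 0 < m ->
  des s = count_lt (fun i => opener s i && closer s i.+1) m.-1.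
Proof.
move=> m0; rewrite /des -card_count_lt ?leq_pred //; apply: eq_card => i.
rewrite !inE; apply/existsP/idP.
- case=> j /andP[/eqP ji]; rewrite (descent_peak ji) => /andP[h1 h2].
  rewrite opener_ord h1 -ji closer_ord h2 /=; have := ltn_ord j; lia.
- case/andP => [/andP[h1 h2] h3]; have jm : i.+1 < m by lia.
  exists (Ordinal jm); rewrite eqxx (@descent_peak _ (Ordinal jm)) //.
  by rewrite -opener_ord h1 -(closer_ord s (Ordinal jm)).
Qed.

End Involution321.

Lemma involution321_eq s t :
  involutive s -> avoids321 s -> involutive t -> avoids321 t ->
  (forall i, i < m -> opener s i = opener t i /\ closer s i = closer t i) ->
  s = t.
Proof.
move=> sK s321 tK t321 st.
have eO : opener s =1 opener t.
  by move=> i; case: (ltnP i m) => h; [case: (st i h) | rewrite !opener_out].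
have eC : closer s =1 closer t.
  by move=> i; case: (ltnP i m) => h; [case: (st i h) | rewrite !closer_out].
have eq_opener (o : 'I_m) : o < s o -> s o = t o.
  move=> os; have ot : o < t o by rewrite -opener_ord -eO opener_ord.
  apply/val_inj/(@count_lt_inj (closer s)).
  - by rewrite closer_ord sK.
  - by rewrite eC closer_ord tK.
  rewrite (count_lt_closer_partner sK s321 os) (eq_count_lt eC).
  by rewrite (count_lt_closer_partner tK t321 ot) (eq_count_lt eO).
apply/permP => i; case: (ltngtP i (s i)) => h.
- exact: eq_opener.
- by have := @eq_opener (s i); rewrite sK => /(_ h) e; rewrite {2}e tK.
- have si : s i = i by apply: val_inj.
  have := eC i; have := eO i; rewrite !closer_ord !opener_ord si ltnn.
  by move=> /esym/negbT it /esym/negbT ti; apply: val_inj => /=; lia.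
Qed.

Lemma rev_conj_inj s : injective (fun i : 'I_m => rev_ord (s (rev_ord i))).
Proof. by move=> x y /rev_ord_inj /perm_inj /rev_ord_inj. Qed.

Definition rev_conj s : {perm 'I_m} := perm (@rev_conj_inj s).

Lemma rev_conjE s i : rev_conj s i = rev_ord (s (rev_ord i)).
Proof. by rewrite permE. Qed.

Lemma rev_conj_involutive s : involutive s -> involutive (rev_conj s).
Proof. by move=> sK i; rewrite !rev_conjE rev_ordK sK rev_ordK. Qed.

Lemma rev_conj_avoids321 s : avoids321 s -> avoids321 (rev_conj s).
Proof.
move=> s321; apply/forallP => i; apply/forallP => j; apply/forallP => k.
rewrite !rev_conjE /=; apply/negP => /and4P[ij jk ji kj].
apply: (@avoids321P s (rev_ord k) (rev_ord j) (rev_ord i) s321) => /=;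
have := ltn_ord (s (rev_ord i)); have := ltn_ord (s (rev_ord j));
have := ltn_ord (s (rev_ord k)); have := ltn_ord k; lia.
Qed.

Lemma opener_rev_conj s i : i < m ->
  opener (rev_conj s) i = closer s (m - i.+1) /\
  closer (rev_conj s) i = opener s (m - i.+1).
Proof.
move=> im; pose x := Ordinal im; have -> : m - i.+1 = rev_ord x by [].
rewrite -[i]/(val x) !opener_ord !closer_ord rev_conjE /=.
by have := ltn_ord (s (rev_ord x)); split; apply/idP/idP; lia.
Qed.

Lemma centrosymmetric_rev_conj s : centrosymmetric s = (rev_conj s == s).
Proof.
apply/forallP/eqP => [cs|e i].
  apply/permP => i; apply/val_inj; rewrite rev_conjE /=.
  by have := eqP (cs i); have := ltn_ord (s (rev_ord i)); lia.
rewrite -{2}e rev_conjE rev_ordK /=.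
by apply/eqP; have := ltn_ord (s i); lia.
Qed.

End Arcs.

Definition cs_opener n u i := if i < n then u i else closer_of u (2 * n - i.+1).
Definition cs_closer n u i := if i < n then closer_of u i else u (2 * n - i.+1).

Section CsWords.
Variables (n : nat) (u : nat -> bool).
Local Notation O := (cs_opener n u).
Local Notation C := (cs_closer n u).

Lemma cs_opener_lo i : i < n -> O i = u i. Proof. by rewrite /cs_opener => ->. Qed.
Lemma cs_opener_hi i : n <= i -> O i = closer_of u (2 * n - i.+1).
Proof. by rewrite /cs_opener ltnNge => ->. Qed.
Lemma cs_closer_lo i : i < n -> C i = closer_of u i. Proof. by rewrite /cs_closer => ->. Qed.
Lemma cs_closer_hi i : n <= i -> C i = u (2 * n - i.+1).
Proof. by rewrite /cs_closer ltnNge => ->. Qed.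

Lemma count_lt_cs_first_half i : i <= n -> count_lt O i = count_lt C i + dyck_height u i.
Proof.
elim: i => [|i IH] // ilt; rewrite !count_ltS IH ?(ltnW ilt) // cs_opener_lo //.
rewrite cs_closer_lo // /closer_of /=.
by case: (u i) => /=; [lia | case: (dyck_height u i) => /=; lia].
Qed.

(* Reflection swaps the two words, so the counts to the left of [n + k] and of
   [n - k] add up symmetrically. *)
Lemma count_lt_cs_mirror k : k <= n ->
  count_lt O (n + k) + count_lt C (n - k) = count_lt O n + count_lt C n /\
  count_lt C (n + k) + count_lt O (n - k) = count_lt O n + count_lt C n.
Proof.
elim: k => [|k IH] kn; first by rewrite addn0 subn0; split; lia.
have [IH1 IH2] := IH (ltnW kn).
have nk : n - k = (n - k.+1).+1 by lia.
rewrite nk !count_ltS in IH1 IH2.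
rewrite addnS !count_ltS cs_opener_hi ?leq_addr // cs_closer_hi ?leq_addr //.
have -> : 2 * n - (n + k).+1 = n - k.+1 by lia.
have lo : n - k.+1 < n by lia.
rewrite cs_closer_lo // cs_opener_lo // in IH1 IH2.
by split; lia.
Qed.

Hypothesis n_gt0 : 0 < n.

Lemma cs_disjoint i : ~~ (O i && C i).
Proof.
rewrite /cs_opener /cs_closer /closer_of.
by case: (i < n); [case: (u i) | rewrite andbC andbA andbN].
Qed.

Lemma cs_balanced : count_lt O (2 * n) = count_lt C (2 * n).
Proof.
have [] := count_lt_cs_mirror (leqnn n); rewrite subnn !count_lt0 mul2n -addnn.
by lia.
Qed.

Lemma cs_closer_below c : c < 2 * n -> C c -> count_lt C c < count_lt O c.
Proof.
move=> cm; case: (ltnP c n) => cn.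
  rewrite cs_closer_lo // => /andP[_ pos].
  by rewrite count_lt_cs_first_half ?(ltnW cn) //; lia.
rewrite cs_closer_hi //; set j := 2 * n - c.+1 => uj.
have jn : j.+1 <= n by rewrite /j; lia.
have [] := count_lt_cs_mirror (_ : c - n <= n); first by lia.
have -> : n + (c - n) = c by lia.
have -> : n - (c - n) = j.+1 by rewrite /j; lia.
by have := count_lt_cs_first_half jn; rewrite /= uj; lia.
Qed.

Lemma cs_free_level x : x < 2 * n -> ~~ O x -> ~~ C x ->
  count_lt O x = count_lt C x.
Proof.
move=> xm; case: (ltnP x n) => xn.
  rewrite cs_opener_lo // cs_closer_lo // /closer_of => /negbTE ux.
  by rewrite ux /= count_lt_cs_first_half ?(ltnW xn) //; lia.
rewrite cs_opener_hi // cs_closer_hi //; set j := 2 * n - x.+1 => Cj /negbTE uj.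
have jn : j.+1 <= n by rewrite /j; lia.
move: Cj; rewrite /closer_of uj /= -leqNgt leqn0 => /eqP j0.
have [] := count_lt_cs_mirror (_ : x - n <= n); first by lia.
have -> : n + (x - n) = x by lia.
have -> : n - (x - n) = j.+1 by rewrite /j; lia.
by have := count_lt_cs_first_half jn; rewrite /= uj j0; lia.
Qed.

Lemma cs_mirror i : i < 2 * n -> O (2 * n - i.+1) = C i /\ C (2 * n - i.+1) = O i.
Proof.
move=> im; case: (ltnP i n) => [lo|hi].
  have hi : n <= 2 * n - i.+1 by lia.
  rewrite (cs_opener_hi hi) (cs_closer_hi hi) (cs_opener_lo lo) (cs_closer_lo lo).
  by have -> : 2 * n - (2 * n - i.+1).+1 = i by lia.
have lo : 2 * n - i.+1 < n by lia.
by rewrite (cs_opener_lo lo) (cs_closer_lo lo) (cs_opener_hi hi) (cs_closer_hi hi).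
Qed.

End CsWords.

Lemma eq_dyck_height n (u v : nat -> bool) : (forall i, i < n -> u i = v i) ->
  forall i, i <= n -> dyck_height u i = dyck_height v i.
Proof. by move=> uv; elim=> [|i IH] //= lt_in; rewrite IH ?(ltnW lt_in) // uv. Qed.

Lemma eq_cs_words n (u v : nat -> bool) : (forall i, i < n -> u i = v i) ->
  forall i, i < 2 * n -> cs_opener n u i = cs_opener n v i /\
                         cs_closer n u i = cs_closer n v i.
Proof.
move=> uv i im; rewrite /cs_opener /cs_closer /closer_of.
case: (ltnP i n) => lt_in; first by rewrite uv // (eq_dyck_height uv) // ltnW.
by rewrite !uv ?(eq_dyck_height uv); lia.
Qed.

Definition fall (u : nat -> bool) i := u i && ~~ u i.+1.

(* [changes u i] records whether the word [false :: u] changes at position [i]. *)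
Definition changes (u : nat -> bool) i := ((0 < i) && u i.-1) (+) u i.

Lemma count_lt_changes u N : count_lt (changes u) N.+1 = 2 * count_lt (fall u) N + u N.
Proof.
elim: N => [|N IH]; first by rewrite /count_lt /= /changes /=; case: (u 0).
rewrite count_ltS IH count_ltS /changes /fall /=.
by case: (u N); case: (u N.+1) => /=; lia.
Qed.

Lemma closer_of_fall u j : closer_of u j.+1 && u j = fall u j.
Proof. by rewrite /closer_of /fall /=; case: (u j); case: (u j.+1); rewrite /= ?andbF. Qed.

(* Peaks of the centrosymmetric words: [fall]s in the first half, their mirror
   images in the second half, and a peak in the middle iff [u (n - 1)]. *)
Lemma count_lt_cs_peaks n (u : nat -> bool) : 0 < n ->
  count_lt (fun i => cs_opener n u i && cs_closer n u i.+1) (2 * n).-1 =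
  count_lt (changes u) n.
Proof.
move=> n_gt0; have -> : (2 * n).-1 = n - 1 + 1 + (n - 1) by lia.
rewrite !count_ltD.
have first_half : count_lt (fun i => cs_opener n u i && cs_closer n u i.+1) (n - 1) =
                  count_lt (fall u) (n - 1).
  apply: eq_in_count => k; rewrite mem_iota add0n => /andP[_ kn] /=.
  rewrite cs_opener_lo ?cs_closer_lo /fall /closer_of /=; try lia.
  by case: (u k); rewrite //= andbT.
have middle : count (fun k => cs_opener n u (n - 1 + k) &&
                              cs_closer n u (n - 1 + k).+1) (iota 0 1) = u (n - 1).
  rewrite /= !addn0 cs_opener_lo ?cs_closer_hi; try lia.
  have -> : 2 * n - (n - 1).+2 = n - 1 by lia.
  by case: (u (n - 1)).
have second_half : count (fun k => cs_opener n u (n - 1 + 1 + k) &&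
                                   cs_closer n u (n - 1 + 1 + k).+1) (iota 0 (n - 1)) =
                   count (fun k => fall u (n - 1 - 1 - k)) (iota 0 (n - 1)).
  apply: eq_in_count => k; rewrite mem_iota add0n => /andP[_ kn] /=.
  rewrite cs_opener_hi ?cs_closer_hi; try lia.
  have -> : 2 * n - (n - 1 + 1 + k).+1 = (n - 1 - 1 - k).+1 by lia.
  have -> : 2 * n - (n - 1 + 1 + k).+2 = n - 1 - 1 - k by lia.
  exact: closer_of_fall.
rewrite first_half middle second_half count_lt_rev.
by have := count_lt_changes u (n - 1); rewrite (_ : (n - 1).+1 = n) //; lia.
Qed.

Lemma sum_count_lt (P : nat -> bool) n : \sum_(i < n) (P i : nat) = count_lt P n.
Proof.
rewrite -(big_mkord xpredT (fun i => (P i : nat))) /index_iota subn0.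
by rewrite /count_lt -sumn_count sumnE big_map.
Qed.

Lemma eq_changes n (u v : nat -> bool) : (forall i, i < n -> changes u i = changes v i) ->
  forall i, i < n -> u i = v i.
Proof.
move=> uv; elim=> [|i IH] lt_in; first by have := uv 0 lt_in.
have := uv i.+1 lt_in; rewrite /changes /= IH ?(ltnW lt_in) //.
by case: (v i); case: (u i.+1); case: (v i.+1).
Qed.

Fixpoint prefix_xor (d : nat -> bool) i :=
  if i is j.+1 then prefix_xor d j (+) d j.+1 else d 0.

Lemma changes_prefix_xor d i : changes (prefix_xor d) i = d i.
Proof. by case: i => [|i]; rewrite /changes /= ?addKb. Qed.

Section CentrosymmetricInvolutions.
Variable n : nat.
Hypothesis n_gt0 : 0 < n.
Local Notation m := (2 * n).
Implicit Types s t : {perm 'I_m}.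

Lemma IC321_involutive s : s \in IC321 m -> involutive s.
Proof. by rewrite inE => /and3P[_ /eqP ss _] i; rewrite -permM ss perm1. Qed.

Lemma IC321_avoids321 s : s \in IC321 m -> avoids321 s.
Proof. by rewrite inE => /and3P[]. Qed.

Lemma IC321_mirror s i : s \in IC321 m -> i < m ->
  opener s i = closer s (m - i.+1) /\ closer s i = opener s (m - i.+1).
Proof.
rewrite inE centrosymmetric_rev_conj => /and3P[/eqP ss _ _].
by rewrite -{1 3}ss; apply: opener_rev_conj.
Qed.

Lemma IC321_words s : s \in IC321 m -> forall i, i < m ->
  opener s i = cs_opener n (opener s) i /\ closer s i = cs_closer n (opener s) i.
Proof.
move=> sIC i im; have sK := IC321_involutive sIC; have s321 := IC321_avoids321 sIC.
case: (ltnP i n) => [lo|hi].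
  rewrite (cs_opener_lo _ lo) (cs_closer_lo _ lo); split => //.
  exact: (closer_of_opener sK s321 (Ordinal im)).
have rim : m - i.+1 < m by lia.
rewrite (cs_opener_hi _ hi) (cs_closer_hi _ hi); have [-> ->] := IC321_mirror sIC im.
by split => //; apply: (closer_of_opener sK s321 (Ordinal rim)).
Qed.

Lemma cs_words_realized (u : nat -> bool) : exists2 s, s \in IC321 m &
  forall i, i < m -> opener s i = cs_opener n u i /\ closer s i = cs_closer n u i.
Proof.
have [s [sK s321 sw]] := exists_involution_321_of_words (@cs_disjoint n u)
  (cs_balanced u n_gt0) (@cs_closer_below n u n_gt0) (@cs_free_level n u n_gt0).
have words i : i < m -> opener s i = cs_opener n u i /\ closer s i = cs_closer n u i.
  by move=> im; rewrite -[i]/(val (Ordinal im)) opener_ord closer_ord; apply: sw.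
exists s => //; rewrite inE centrosymmetric_rev_conj s321 andbT; apply/andP; split.
  apply/eqP/involution321_eq => //; [exact: rev_conj_involutive |
    exact: rev_conj_avoids321 | move=> i im].
  have rim : m - i.+1 < m by lia.
  have [-> ->] := opener_rev_conj s im; have [-> ->] := words _ rim.
  by have [-> ->] := cs_mirror u n_gt0 im; have [-> ->] := words _ im.
by apply/eqP/permP => i; rewrite permM sK perm1.
Qed.

Definition opener_changes s : {ffun 'I_n -> bool} :=
  [ffun i : 'I_n => changes (opener s) i].

Lemma des_opener_changes s : s \in IC321 m ->
  des s = \sum_(i < n) (opener_changes s i : nat).
Proof.
move=> sIC; under eq_bigr do rewrite ffunE.
rewrite sum_count_lt -(count_lt_cs_peaks _ n_gt0).
rewrite (des_peaks (IC321_involutive sIC) (IC321_avoids321 sIC)); last by lia.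
apply: eq_in_count => k; rewrite mem_iota add0n ltn_predRL => /andP[_ lt_k1m].
have [-> _] := IC321_words sIC (ltnW lt_k1m).
by have [_ ->] := IC321_words sIC lt_k1m.
Qed.

Lemma opener_changes_inj : {in IC321 m &, injective opener_changes}.
Proof.
move=> s t sIC tIC st; apply: (involution321_eq (IC321_involutive sIC)
  (IC321_avoids321 sIC) (IC321_involutive tIC) (IC321_avoids321 tIC)) => i im.
have first_half : forall j, j < n -> opener s j = opener t j.
  apply: eq_changes => j lt_jn.
  by have := congr1 (fun f : {ffun _} => f (Ordinal lt_jn)) st; rewrite !ffunE.
have [-> ->] := IC321_words sIC im; have [-> ->] := IC321_words tIC im.
exact: eq_cs_words.
Qed.

Lemma opener_changes_onto : opener_changes @: IC321 m = setT.
Proof.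
apply/setP => d; rewrite inE; apply/imsetP.
pose u := prefix_xor (fun i => if insub i is Some j then d j else false).
have [s sIC words] := cs_words_realized u; exists s => //.
have first_half j : j < n -> opener s j = u j.
  move=> lt_jn; have lt_jm : j < m by lia.
  by have [-> _] := words j lt_jm; rewrite cs_opener_lo.
apply/ffunP => i; have lt_in := ltn_ord i; rewrite ffunE /changes !first_half //.
  by rewrite -/(changes u i) changes_prefix_xor valK.
exact: leq_ltn_trans (leq_pred i) lt_in.
Qed.

End CentrosymmetricInvolutions.

Local Open Scope ring_scope.

Theorem mainTheorem3 (n : nat) (hn : (1 <= n)%N) :
  \sum_(s in IC321 (2 * n)) ('X ^+ des s : {poly int}) = (1 + 'X) ^+ n.
Proof.
pose F (d : {ffun 'I_n -> bool}) : {poly int} := \prod_(i < n) 'X ^+ d i.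
rewrite (eq_bigr (F \o @opener_changes n)) => [|s sIC]; last first.
  by rewrite /F /= (des_opener_changes hn sIC) -prodrXr.
rewrite -(big_imset F (opener_changes_inj hn)) opener_changes_onto //.
rewrite (eq_bigl xpredT) => [|d]; last by rewrite inE.
rewrite /F -(bigA_distr_bigA (fun (i : 'I_n) (b : bool) => 'X ^+ b : {poly int})).
under eq_bigr do rewrite big_bool /= expr1 expr0.
by rewrite prodr_const card_ord addrC.
Qed.
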